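(* Let $F\subseteq\{1,\dots,d\}$ and $\beta=\hat\beta(F)$. Let $\beta'\in\mathbb{R}^d$ have support $F'$, and let $s$ be a positive integer with $|F\cup F'|\le s$. Let $i$ be an index satisfying $Q(\beta)-\min_{\eta}Q(\beta+\eta e_i)\ge Q(\beta)-\min_{j,\eta}Q(\beta+\eta e_j)$ (i.e. $i$ attains the maximal single-coordinate decrease). Then $$|F'-F|\big(Q(\beta)-\min_\eta Q(\beta+\eta e_i)\big)\ge\frac{\rho_-(s)}{\rho_+(1)}\big(Q(\beta)-Q(\beta')\big).$$
   Context: Let $Q:\mathbb{R}^d\to\mathbb{R}$ be convex and continuously differentiable. $e_j$ is the $j$-th standard basis vector, $\mathrm{supp}(\beta)=\{j:\beta_j\ne0\}$, $\|\beta\|_0=|\mathrm{supp}(\beta)|$, $A-B$ is set difference. For $F\subseteq\{1,\dots,d\}$, $\hat\beta(F)$ denotes a minimizer of $Q$ over $\{\beta:\mathrm{supp}(\beta)\subseteq F\}$ (assumed to exist). For a positive integer $s$, the restricted strong convexity constants $\rho_-(s),\rho_+(s)>0$ are constants such that for all $\beta,\beta'\in\mathbb{R}^d$ with $\|\beta'-\beta\|_0\le s$: $\frac{\rho_-(s)}{2}\|\beta'-\beta\|^2\le Q(\beta')-Q(\beta)-\langle\nabla Q(\beta),\beta'-\beta\rangle\le\frac{\rho_+(s)}{2}\|\beta'-\beta\|^2.$ *)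

(* classical reals. Vectors of R^d are represented as
   functions nat -> R that vanish at coordinates >= d (predicate inRd);
   coordinates are indexed 0..d-1 (paper's 1..d). *)
From Stdlib Require Import Reals List.
Open Scope R_scope.

Definition vec := nat -> R.

Definition inRd (d : nat) (v : vec) : Prop := forall k, (d <= k)%nat -> v k = 0.

Definition vadd (v w : vec) : vec := fun k => v k + w k.
Definition vsub (v w : vec) : vec := fun k => v k - w k.
Definition vscale (a : R) (v : vec) : vec := fun k => a * v k.

Definition e (i : nat) : vec := fun k => if Nat.eqb k i then 1 else 0.

Definition inner (d : nat) (v w : vec) : R :=
  fold_right Rplus 0 (map (fun k => v k * w k) (seq 0 d)).
Definition norm (d : nat) (v : vec) : R := sqrt (inner d v v).

Definition card (d : nat) (p : nat -> bool) : nat :=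
  length (filter p (seq 0 d)).

Definition nzb (x : R) : bool := if Req_EM_T x 0 then false else true.

Definition l0 (d : nat) (v : vec) : nat := card d (fun k => nzb (v k)).

Definition convex_on (d : nat) (Q : vec -> R) : Prop :=
  forall x y t, inRd d x -> inRd d y -> 0 <= t <= 1 ->
    Q (vadd (vscale t x) (vscale (1 - t) y)) <= t * Q x + (1 - t) * Q y.

Definition is_gradient (d : nat) (Q : vec -> R) (g : vec -> vec) : Prop :=
  forall x, inRd d x -> inRd d (g x) /\
    forall eps, 0 < eps -> exists delta, 0 < delta /\
      forall h, inRd d h -> 0 < norm d h < delta ->
        Rabs (Q (vadd x h) - Q x - inner d (g x) h) <= eps * norm d h.

Definition continuous_on (d : nat) (g : vec -> vec) : Prop :=
  forall x, inRd d x -> forall eps, 0 < eps -> exists delta, 0 < delta /\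
    forall y, inRd d y -> norm d (vsub y x) < delta -> norm d (vsub (g y) (g x)) < eps.

(* restricted strong convexity / smoothness with constants rm = rho_-(s), rp = rho_+(s) *)
Definition RSC (d : nat) (Q : vec -> R) (g : vec -> vec) (s : nat) (rm rp : R) : Prop :=
  0 < rm /\ 0 < rp /\
  forall b b', inRd d b -> inRd d b' -> (l0 d (vsub b' b) <= s)%nat ->
    rm / 2 * (norm d (vsub b' b))^2 <= Q b' - Q b - inner d (g b) (vsub b' b) /\
    Q b' - Q b - inner d (g b) (vsub b' b) <= rp / 2 * (norm d (vsub b' b))^2.

(* Write G = grad Q(beta) and D for the best single-coordinate decrease
   Q(beta) - Q(beta + eta_i e_i).  The proof has three ingredients:
   - smoothness along one coordinate (RSC with s = 1) gives
       Q(beta + t e_j) <= Q(beta) + t G_j + rho_+(1)/2 t^2,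
     and choosing t = -G_j/rho_+(1) yields a decrease of G_j^2/(2 rho_+(1));
     hence G_j = 0 for j in F (beta is optimal on F), and G_j^2/(2 rho_+(1)) <= D
     for every j (i is the best coordinate);
   - restricted strong convexity (RSC with s) at beta, beta' gives
       Q(beta') - Q(beta) >= sum_k (G_k x_k + rho_-(s)/2 x_k^2),  x = beta' - beta,
     and each summand is >= -G_k^2/(2 rho_-(s)) for k in F' - F and >= 0 otherwise;
   - summing, Q(beta) - Q(beta') <= |F' - F| (rho_+(1)/rho_-(s)) D.  Only the
   RSC inequalities are used. *)
From Stdlib Require Import Reals Lra Lia List Arith.
Open Scope R_scope.

Definition Ssum (l : list nat) (f : nat -> R) : R := fold_right Rplus 0 (map f l).

Lemma Ssum_le (l : list nat) (f h : nat -> R) :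
  (forall k, In k l -> f k <= h k) -> Ssum l f <= Ssum l h.
Proof.
  induction l as [|a l IH]; intros Hfh; unfold Ssum in *; simpl; [lra|].
  assert (Ha := Hfh a (or_introl eq_refl)).
  assert (Hl := IH (fun k Hk => Hfh k (or_intror Hk))). lra.
Qed.

Lemma Ssum_plus (l : list nat) (f h : nat -> R) :
  Ssum l (fun k => f k + h k) = Ssum l f + Ssum l h.
Proof. induction l; unfold Ssum in *; simpl; [lra|]. rewrite IHl. lra. Qed.

Lemma Ssum_scale (l : list nat) (c : R) (f : nat -> R) :
  Ssum l (fun k => c * f k) = c * Ssum l f.
Proof. induction l; unfold Ssum in *; simpl; [lra|]. rewrite IHl. lra. Qed.

Lemma Ssum_opp (l : list nat) (f : nat -> R) : Ssum l (fun k => - f k) = - Ssum l f.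
Proof. induction l; unfold Ssum in *; simpl; [lra|]. rewrite IHl. lra. Qed.

Lemma Ssum_sq_nonneg (l : list nat) (w : nat -> R) : 0 <= Ssum l (fun k => w k * w k).
Proof.
  induction l as [|a l IH]; unfold Ssum in *; simpl; [lra|].
  pose proof (Rle_0_sqr (w a)). unfold Rsqr in *. lra.
Qed.

Lemma Ssum_zero (l : list nat) (f : nat -> R) :
  (forall k, In k l -> f k = 0) -> Ssum l f = 0.
Proof.
  induction l as [|a l IH]; intros Hf; unfold Ssum in *; simpl; [lra|].
  rewrite IH by (intros; apply Hf; right; auto). rewrite (Hf a (or_introl eq_refl)). lra.
Qed.

Lemma Ssum_single (n a j : nat) (f : nat -> R) :
  (a <= j < a + n)%nat -> (forall k, k <> j -> f k = 0) -> Ssum (seq a n) f = f j.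
Proof.
  revert a. induction n as [|n IH]; intros a Hj Hf; [lia|].
  unfold Ssum; simpl; fold (Ssum (seq (S a) n) f).
  destruct (Nat.eq_dec a j) as [<-|Hne].
  - rewrite (Ssum_zero _ f); [lra|].
    intros k Hk. apply in_seq in Hk. apply Hf. lia.
  - rewrite Hf by auto. rewrite IH by (auto; lia). lra.
Qed.

Lemma Ssum_indicator_le (l : list nat) (p : nat -> bool) (a : nat -> R) (M : R) :
  (forall k, In k l -> p k = true -> a k <= M) ->
  Ssum l (fun k => if p k then a k else 0) <= INR (length (filter p l)) * M.
Proof.
  induction l as [|x l IH]; intros HaM; unfold Ssum in *; simpl; [lra|].
  assert (Hl := IH (fun k Hk => HaM k (or_intror Hk))).
  destruct (p x) eqn:Ex; cbn [filter length map fold_right]; [|lra].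
  rewrite S_INR. assert (a x <= M) by (apply HaM; simpl; auto). lra.
Qed.

Lemma filter_length_mono (l : list nat) (p q : nat -> bool) :
  (forall k, In k l -> p k = true -> q k = true) ->
  (length (filter p l) <= length (filter q l))%nat.
Proof.
  induction l as [|a l IH]; intros Hpq; simpl; [lia|].
  assert (Hl := IH (fun k Hk => Hpq k (or_intror Hk))).
  destruct (p a) eqn:Ea.
  - rewrite (Hpq a (or_introl eq_refl) Ea). simpl. lia.
  - destruct (q a); simpl; lia.
Qed.

Lemma filter_length_le1 (l : list nat) (p : nat -> bool) (j : nat) :
  NoDup l -> (forall k, In k l -> p k = true -> k = j) -> (length (filter p l) <= 1)%nat.
Proof.
  intros Hnd Hj.
  assert (Hsub : incl (filter p l) (j :: nil)).
  { intros k Hk. apply filter_In in Hk as [Hkl Hpk]. left. symmetry. auto. }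
  exact (NoDup_incl_length (NoDup_filter p Hnd) Hsub).
Qed.

Lemma nzb_true (x : R) : nzb x = true -> x <> 0.
Proof. unfold nzb. destruct (Req_EM_T x 0); congruence. Qed.

Lemma nzb_false (x : R) : nzb x = false -> x = 0.
Proof. unfold nzb. destruct (Req_EM_T x 0); congruence. Qed.

Lemma nzb_of (x : R) : x <> 0 -> nzb x = true.
Proof. unfold nzb. destruct (Req_EM_T x 0); congruence. Qed.

Lemma norm_sq (d : nat) (w : vec) : norm d w ^ 2 = inner d w w.
Proof.
  unfold norm. simpl. rewrite Rmult_1_r. apply sqrt_sqrt. apply Ssum_sq_nonneg.
Qed.

Lemma inner_single (d : nat) (v w : vec) (j : nat) :
  (j < d)%nat -> (forall k, k <> j -> w k = 0) -> inner d v w = v j * w j.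
Proof.
  intros Hj Hw. unfold inner. fold (Ssum (seq 0 d) (fun k => v k * w k)).
  apply (Ssum_single d 0 j); [lia|].
  intros k Hk. rewrite Hw by auto. ring.
Qed.

Lemma quadratic_lower_bound (a x c : R) :
  0 < c -> - (a * a / (2 * c)) <= a * x + c / 2 * (x * x).
Proof.
  intros Hc.
  assert (Hsq : 0 <= (a + c * x) * (a + c * x)) by apply Rle_0_sqr.
  assert (Heq : a * x + c / 2 * (x * x) + a * a / (2 * c)
                = (a + c * x) * (a + c * x) / (2 * c)) by (field; lra).
  assert (0 <= (a + c * x) * (a + c * x) / (2 * c))
    by (apply Rmult_le_pos; [lra | left; apply Rinv_0_lt_compat; lra]).
  lra.
Qed.

Section CoordinateSteps.

Variables (d : nat) (Q : vec -> R) (g : vec -> vec) (beta : vec).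
Hypothesis Hb : inRd d beta.

Lemma coord_step_diff (j : nat) (t : R) (k : nat) :
  vsub (vadd beta (vscale t (e j))) beta k = if Nat.eqb k j then t else 0.
Proof. unfold vsub, vadd, vscale, e. destruct (Nat.eqb k j); ring. Qed.

Lemma coord_step_inRd (j : nat) (t : R) :
  (j < d)%nat -> inRd d (vadd beta (vscale t (e j))).
Proof.
  intros Hj k Hk. unfold vadd, vscale, e. rewrite Hb by auto.
  destruct (Nat.eqb_spec k j); [lia | ring].
Qed.

Lemma coord_step_l0 (j : nat) (t : R) :
  (l0 d (vsub (vadd beta (vscale t (e j))) beta) <= 1)%nat.
Proof.
  unfold l0, card. apply (filter_length_le1 _ _ j); [apply seq_NoDup|].
  intros k _ Hk. apply nzb_true in Hk. rewrite coord_step_diff in Hk.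
  destruct (Nat.eqb_spec k j); [auto | congruence].
Qed.

Variables (rm1 rp1 : R).
Hypothesis HR1 : RSC d Q g 1 rm1 rp1.

Lemma coord_upper_bound (j : nat) (t : R) : (j < d)%nat ->
  Q (vadd beta (vscale t (e j))) <= Q beta + t * g beta j + rp1 / 2 * (t * t).
Proof.
  intros Hj. destruct HR1 as [_ [_ HRSC]].
  destruct (HRSC beta _ Hb (coord_step_inRd j t Hj) (coord_step_l0 j t)) as [_ Hup].
  assert (Hsupp : forall k, k <> j -> vsub (vadd beta (vscale t (e j))) beta k = 0).
  { intros k Hk. rewrite coord_step_diff. destruct (Nat.eqb_spec k j); congruence. }
  rewrite norm_sq, !(inner_single d _ _ j Hj Hsupp), coord_step_diff, Nat.eqb_refl in Hup.
  lra.
Qed.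

Lemma coord_step_decrease (j : nat) : (j < d)%nat ->
  Q (vadd beta (vscale (- (g beta j / rp1)) (e j)))
    <= Q beta - g beta j * g beta j / (2 * rp1).
Proof.
  intros Hj. destruct HR1 as [_ [Hrp _]].
  pose proof (coord_upper_bound j (- (g beta j / rp1)) Hj).
  assert (- (g beta j / rp1) * g beta j + rp1 / 2 * (- (g beta j / rp1) * - (g beta j / rp1))
          = - (g beta j * g beta j / (2 * rp1))) by (field; lra).
  lra.
Qed.

Lemma grad_zero_on_support (F : nat -> bool) :
  (forall k, (k < d)%nat -> beta k <> 0 -> F k = true) ->
  (forall gam, inRd d gam -> (forall k, (k < d)%nat -> gam k <> 0 -> F k = true) ->
     Q beta <= Q gam) ->
  forall j, (j < d)%nat -> F j = true -> g beta j = 0.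
Proof.
  intros HbF Hopt j Hj HFj. destruct HR1 as [_ [Hrp _]].
  assert (Hle : Q beta <= Q (vadd beta (vscale (- (g beta j / rp1)) (e j)))).
  { apply Hopt; [apply coord_step_inRd; exact Hj|].
    intros k Hk Hnz. unfold vadd, vscale, e in Hnz.
    destruct (Nat.eqb_spec k j) as [->|_]; [exact HFj|].
    apply HbF; [exact Hk|]. intros Hz. apply Hnz. rewrite Hz. ring. }
  pose proof (coord_step_decrease j Hj).
  assert (Hq : g beta j * g beta j / (2 * rp1) <= 0) by lra.
  assert (Hsq : g beta j * g beta j <= 0).
  { apply (Rmult_le_compat_r (2 * rp1)) in Hq; [|lra].
    replace (g beta j * g beta j / (2 * rp1) * (2 * rp1)) with (g beta j * g beta j)
      in Hq by (field; lra). lra. }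
  nra.
Qed.

Lemma grad_sq_le_best_decrease (D : R) :
  (forall j eta, (j < d)%nat -> Q beta - Q (vadd beta (vscale eta (e j))) <= D) ->
  forall j, (j < d)%nat -> g beta j * g beta j / (2 * rp1) <= D.
Proof.
  intros Hbest j Hj.
  pose proof (coord_step_decrease j Hj).
  pose proof (Hbest j (- (g beta j / rp1)) Hj). lra.
Qed.

End CoordinateSteps.

Lemma rsc_lower_bound_coordinatewise (d s : nat) (Q : vec -> R) (g : vec -> vec)
    (rm rp : R) (beta beta' : vec) :
  RSC d Q g s rm rp -> inRd d beta -> inRd d beta' -> (l0 d (vsub beta' beta) <= s)%nat ->
  Ssum (seq 0 d) (fun k => g beta k * vsub beta' beta k
                           + rm / 2 * (vsub beta' beta k * vsub beta' beta k))
    <= Q beta' - Q beta.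
Proof.
  intros [_ [_ HRSC]] Hb Hb' Hl0.
  destruct (HRSC beta beta' Hb Hb' Hl0) as [Hlow _].
  rewrite norm_sq in Hlow.
  rewrite Ssum_plus, Ssum_scale. unfold inner in Hlow. unfold Ssum. lra.
Qed.

Section Competitor.

Variables (d : nat) (F : nat -> bool) (beta beta' : vec).
Hypothesis HbF : forall k, (k < d)%nat -> beta k <> 0 -> F k = true.

Lemma l0_diff_le_union :
  (l0 d (vsub beta' beta) <= card d (fun k => orb (F k) (nzb (beta' k))))%nat.
Proof.
  apply filter_length_mono. intros k Hk Hnz. apply in_seq in Hk.
  apply nzb_true in Hnz. unfold vsub in Hnz.
  destruct (Req_dec (beta' k) 0) as [Hz|Hz].
  - rewrite (HbF k); [reflexivity | lia |]. intros Hc. apply Hnz. rewrite Hz, Hc. ring.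
  - rewrite (nzb_of _ Hz). apply Bool.orb_true_r.
Qed.

Variables (Q : vec -> R) (g : vec -> vec) (s : nat) (rm rp : R).
Hypotheses (HRs : RSC d Q g s rm rp) (Hb : inRd d beta) (Hb' : inRd d beta')
  (Hcard : (card d (fun k => orb (F k) (nzb (beta' k))) <= s)%nat)
  (HG0 : forall j, (j < d)%nat -> F j = true -> g beta j = 0).

Lemma gap_le_fresh_gradient :
  Q beta - Q beta'
    <= Ssum (seq 0 d) (fun k => if andb (nzb (beta' k)) (negb (F k))
                                then g beta k * g beta k / (2 * rm) else 0).
Proof.
  pose proof HRs as [Hrm _].
  assert (Hl0 : (l0 d (vsub beta' beta) <= s)%nat)
    by exact (Nat.le_trans _ _ _ l0_diff_le_union Hcard).
  pose proof (rsc_lower_bound_coordinatewise d s Q g rm rp beta beta' HRs Hb Hb' Hl0)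
    as Hlow.
  enough (Hterm : Ssum (seq 0 d) (fun k => - (if andb (nzb (beta' k)) (negb (F k))
                                             then g beta k * g beta k / (2 * rm) else 0))
                  <= Q beta' - Q beta) by (rewrite Ssum_opp in Hterm; lra).
  eapply Rle_trans; [|exact Hlow].
  apply Ssum_le. intros k Hk. apply in_seq in Hk.
  destruct (F k) eqn:EF.
  - rewrite (HG0 k) by (auto; lia). rewrite Bool.andb_false_r. nra.
  - destruct (nzb (beta' k)) eqn:En; simpl.
    + apply quadratic_lower_bound. exact Hrm.
    + assert (Hbk : beta k = 0).
      { destruct (Req_dec (beta k) 0) as [|Hnz]; [assumption|].
        rewrite (HbF k) in EF; [discriminate | lia | exact Hnz]. }
      unfold vsub. rewrite (nzb_false _ En), Hbk. nra.
Qed.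

End Competitor.

Theorem mainTheorem10
  (d : nat) (Q : vec -> R) (g : vec -> vec)
  (Hconv : convex_on d Q) (Hgrad : is_gradient d Q g) (Hcont : continuous_on d g)
  (s : nat) (Hs : (1 <= s)%nat)
  (rm_s rp_s rm_1 rp_1 : R)
  (HRs : RSC d Q g s rm_s rp_s) (HR1 : RSC d Q g 1 rm_1 rp_1)
  (F : nat -> bool) (beta : vec)
  (Hb : inRd d beta) (HbF : forall k, (k < d)%nat -> beta k <> 0 -> F k = true)
  (Hbopt : forall gam, inRd d gam ->
     (forall k, (k < d)%nat -> gam k <> 0 -> F k = true) -> Q beta <= Q gam)
  (beta' : vec) (Hb' : inRd d beta')
  (Hcard : (card d (fun k => orb (F k) (nzb (beta' k))) <= s)%nat)
  (i : nat) (Hi : (i < d)%nat) (eta_i : R)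
  (Hmin_i : forall eta, Q (vadd beta (vscale eta_i (e i))) <= Q (vadd beta (vscale eta (e i))))
  (Hbest : forall j eta, (j < d)%nat ->
     Q (vadd beta (vscale eta_i (e i))) <= Q (vadd beta (vscale eta (e j)))) :
  INR (card d (fun k => andb (nzb (beta' k)) (negb (F k))))
    * (Q beta - Q (vadd beta (vscale eta_i (e i))))
  >= rm_s / rp_1 * (Q beta - Q beta').
Proof.
  pose proof HRs as [Hrm _]. pose proof HR1 as [_ [Hrp _]].
  set (D := Q beta - Q (vadd beta (vscale eta_i (e i)))).
  set (fresh := fun k => andb (nzb (beta' k)) (negb (F k))).
  assert (HG0 := grad_zero_on_support d Q g beta Hb rm_1 rp_1 HR1 F HbF Hbopt).
  assert (HGD : forall k, (k < d)%nat -> g beta k * g beta k / (2 * rp_1) <= D).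
  { apply (grad_sq_le_best_decrease d Q g beta Hb rm_1 rp_1 HR1).
    intros j eta Hj. pose proof (Hbest j eta Hj). unfold D. lra. }
  assert (Hgap : Q beta - Q beta' <= INR (card d fresh) * (rp_1 / rm_s * D)).
  { eapply Rle_trans;
      [exact (gap_le_fresh_gradient d F beta beta' HbF Q g s rm_s rp_s HRs Hb Hb' Hcard HG0)|].
    apply Ssum_indicator_le. intros k Hk _. apply in_seq in Hk.
    replace (g beta k * g beta k / (2 * rm_s))
      with (rp_1 / rm_s * (g beta k * g beta k / (2 * rp_1))) by (field; lra).
    apply Rmult_le_compat_l; [left; apply Rdiv_lt_0_compat; lra | apply HGD; lia]. }
  apply Rle_ge.
  replace (INR (card d fresh) * D)
    with (rm_s / rp_1 * (INR (card d fresh) * (rp_1 / rm_s * D))) by (field; lra).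
  apply Rmult_le_compat_l; [left; apply Rdiv_lt_0_compat; lra | exact Hgap].
Qed.
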